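(* Let $i<n$ be positive integers with $n\equiv\pm1\pmod i$ and let $g:=e^{-Z}e^{-X}\exp\big(-\sum_{1\le k<i}\binom{i}{k}E_{ki}\big)\in SL_n$. Then all entries of the matrix $g$ are integers.
   Context: Work over a field of characteristic $0$. $e_{jk}$ is the $n\times n$ matrix unit, with $e_{jk}:=0$ if $j$ or $k\notin[1,n]$; $p\bmod q\in[0,q-1]$. $\epsilon:=1$ if $n\bmod i=1$, else $\epsilon:=-1$; $c_k:=\lfloor(n-k)/i\rfloor$, $a_k:=\epsilon((-nk)\bmod i)$. For $k,\ell\in\mathbb{Z}$, $\xi_{k\ell}:=\sum_{p\in\mathbb{Z}}e_{k+ip,\ell+ip}$, and $E_{k\ell}:=\xi_{k+1,\ell+1}$ if $n\bmod i=1$, $E_{k\ell}:=-\xi_{i-\ell,i-k}$ otherwise. $X:=\sum_{1\le j\le n-i}c_je_{j,j+i}$ and $Z:=\sum_{1\le j<i}a_j\xi_{j+1,j}$. *)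

From HB Require Import structures.
From mathcomp Require Import all_boot all_order all_algebra.
Set Implicit Arguments. Unset Strict Implicit. Unset Printing Implicit Defensive.
Import Order.TTheory GRing.Theory Num.Theory.
Local Open Scope ring_scope.

Section Defs.
Variable F : fieldType.
Variables n i : nat.

(* 1-based position of an ordinal index *)
Definition pos (r : 'I_n) : int := (r.+1 : nat)%:Z.

(* matrix unit e_{jk}, = 0 if j or k is not in [1,n] *)
Definition emx (j k : int) : 'M[F]_n :=
  \matrix_(r, c) (((pos r == j) && (pos c == k))%:R : F).

(* xi_{kl} := sum_{p in Z} e_{k+ip, l+ip} (written out entrywise; at most
   one p contributes to each entry since i > 0) *)
Definition xi (k l : int) : 'M[F]_n :=
  \matrix_(r, c) ((
     ((pos r - k == pos c - l) && (i%:Z %| pos r - k)%Z))%:R : F).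

Definition eps : int := if (n %% i == 1)%N then 1 else -1.
Definition cc (k : nat) : nat := ((n - k) %/ i)%N.
Definition aa (k : nat) : int := eps * ((- (n%:Z * k%:Z)) %% i%:Z)%Z.

Definition EE (k l : int) : 'M[F]_n :=
  if (n %% i == 1)%N then xi (k + 1) (l + 1) else - xi (i%:Z - l) (i%:Z - k).

Definition XX : 'M[F]_n :=
  \sum_(1 <= j < (n - i).+1) (cc j)%:R *: emx j (j + i)%N.

Definition ZZ : 'M[F]_n :=
  \sum_(1 <= j < i) (aa j)%:~R *: xi (j.+1) j.

(* matrix powers and the exponential of a nilpotent n x n matrix:
   exp A = sum_{k < n} A^k / k!  (A^n = 0 for nilpotent A) *)
Definition mxpow (A : 'M[F]_n) (k : nat) : 'M[F]_n := iter k (mulmx A) 1%:M.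
Definition nilexp (A : 'M[F]_n) : 'M[F]_n :=
  \sum_(k < n) (k`!%:R)^-1 *: mxpow A k.

Definition gg : 'M[F]_n :=
  nilexp (- ZZ) *m nilexp (- XX) *m
  nilexp (- \sum_(1 <= k < i) 'C(i, k)%:R *: EE k i).
End Defs.

From HB Require Import structures.
From mathcomp Require Import all_boot all_order all_algebra zify ring.
Import Order.TTheory GRing.Theory Num.Theory.
Local Open Scope ring_scope.

(* All three factors are integral.  -X and -Z are weighted shifts (by i and by -1),
   so an entry of their k-th power is a product of k successive weights along a chain
   of rows.  Along a chain the weights of -X are -c_j, -c_j + 1, ... and, because
   n = +-1 (mod i), those of -Z are also consecutive integers until they reach 0; a
   product of k consecutive integers is divisible by k!.  The matrices E_{ki}, 0 < k < i,
   have supports that are incompatible modulo i, so the third exponent squares to zero. *)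

Lemma modz_eq (x q r d : int) : 0 <= r < d -> x = q * d + r -> (x %% d)%Z = r.
Proof. by move=> r_range ->; rewrite modzMDl modz_small. Qed.

Lemma prod_addn_ffact (m k : nat) : (\prod_(t < k) (m + t).+1 = (m + k) ^_ k)%N.
Proof.
elim: k => [|k IHk]; first by rewrite big_ord0 ffactn0.
by rewrite big_ord_recr /= IHk addnS ffactSS mulnC.
Qed.

Lemma dvdz_fact_prod_consecutive (a : int) (k : nat) :
  (k`!%:Z %| \prod_(t < k) (a + t%:Z))%Z.
Proof.
rewrite dvdzE absz_nat (big_morph absz abszM (erefl : `|1%R|%N = 1%N)).
have [a_gt0 | a_le0] := ltrP 0 a.
  rewrite (eq_bigr (fun t : 'I_k => (`|a| - 1 + t).+1)%N) => [|t _]; last by lia.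
  by rewrite prod_addn_ffact -bin_ffact dvdn_mull.
have [ak_gt0 | ak_le0] := ltrP 0 (a + k%:Z).
  have ltak : (`|a| < k)%N by lia.
  by rewrite (bigD1 (Ordinal ltak)) //= (_ : absz _ = 0%N) ?mul0n //; lia.
rewrite (eq_bigr (fun t : 'I_k => `|a| - t)%N) => [|t _]; last by have := ltn_ord t; lia.
by rewrite -(ffact_prod `|a|) -bin_ffact dvdn_mull.
Qed.

Lemma dvdz_fact_prod_arith (a e : int) (k : nat) : (e == 1) || (e == -1) ->
  (k`!%:Z %| \prod_(t < k) (a + t%:Z * e))%Z.
Proof.
case/orP=> /eqP->.
  by under eq_bigr do rewrite mulr1; exact: dvdz_fact_prod_consecutive.
rewrite (eq_bigr (fun t : 'I_k => - (- a + t%:Z))) => [|t _]; last first.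
  by rewrite mulrN1 opprD opprK.
by rewrite prodrN dvdz_mull // dvdz_fact_prod_consecutive.
Qed.

Lemma dvdz_fact_prod_steps (u : nat -> int) (e : int) (k : nat) :
  (e == 1) || (e == -1) ->
  (forall t, u t != 0 -> u t.+1 != 0 -> u t.+1 = u t + e) ->
  (k`!%:Z %| \prod_(t < k) u t)%Z.
Proof.
move=> e_unit u_step.
have [[t _ /eqP ut0] | prod_neq0] := altP (@prodf_eq0 _ _ predT (fun t : 'I_k => u t)).
  by rewrite (bigD1 t) //= ut0 mul0r.
have u_neq0 t : (t < k)%N -> u t != 0.
  move=> ltk; apply: contraNneq prod_neq0 => ut0.
  by apply/prodf_eq0; exists (Ordinal ltk); rewrite ?ut0.
have u_arith t : (t < k)%N -> u t = u 0%N + t%:Z * e.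
  elim: t => [|t IHt] ltk; first by rewrite mul0r addr0.
  rewrite u_step ?u_neq0 ?(ltnW ltk) // IHt ?(ltnW ltk) //.
  by rewrite -[t.+1]addn1 PoszD mulrDl mul1r addrA.
rewrite (eq_bigr (fun t : 'I_k => u 0%N + t%:Z * e)) => [|t _]; last exact: u_arith.
exact: dvdz_fact_prod_arith.
Qed.

Section IntegralMatrices.
Variable F : fieldType.
Variable n : nat.

Definition is_int (x : F) : Prop := exists z : int, x = z%:~R.

Lemma is_int_nat (m : nat) : is_int m%:R.
Proof. by exists m. Qed.

Lemma is_intN x : is_int x -> is_int (- x).
Proof. by case=> z ->; exists (- z); rewrite mulrNz. Qed.

Lemma is_intM x y : is_int x -> is_int y -> is_int (x * y).
Proof. by case=> a ->; case=> b ->; exists (a * b); rewrite intrM. Qed.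

Lemma is_int_sum (I : Type) (r : seq I) (P : pred I) (G : I -> F) :
  (forall j, P j -> is_int (G j)) -> is_int (\sum_(j <- r | P j) G j).
Proof.
move=> G_int; apply: big_rec => [|j x Pj [z ->]]; first by exists 0.
by have [w ->] := G_int j Pj; exists (w + z); rewrite intrD.
Qed.

Definition intmx (A : 'M[F]_n) : Prop := forall r c, is_int (A r c).

Lemma intmx_mul A B : intmx A -> intmx B -> intmx (A *m B).
Proof. by move=> A_int B_int r c; rewrite mxE; apply: is_int_sum => j _; apply: is_intM. Qed.

Hypothesis charF0 : [pchar F] =i pred0.

Lemma nilexp_intmx (A : 'M[F]_n) :
  (forall k, (k < n)%N -> forall r c, exists z : int, mxpow A k r c = (k`!%:Z * z)%:~R) ->
  intmx (nilexp A).
Proof.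
move=> Ak_int r c; rewrite /nilexp summxE; apply: is_int_sum => -[k ltkn] _.
rewrite mxE; have [z ->] := Ak_int k ltkn r c; exists z.
rewrite intrM mulrA /= pmulrn mulVf ?mul1r //.
by move/pcharf0P: charF0 => ->; rewrite -lt0n fact_gt0.
Qed.

Lemma mxpow_sqr0 (A : 'M[F]_n) k : A *m A = 0 -> (1 < k)%N -> mxpow A k = 0.
Proof.
move=> AA0; case: k => [|[|k]] // _.
by rewrite /mxpow iterS iterS mulmxA AA0 mul0mx.
Qed.

Lemma nilexp_sqr0_intmx (A : 'M[F]_n) : A *m A = 0 -> intmx A -> intmx (nilexp A).
Proof.
move=> AA0 A_int; apply: nilexp_intmx => -[|[|k]] _ r c.
- by exists (r == c)%:Z; rewrite mxE mul1r.
- by have [z Az] := A_int r c; exists z; rewrite /mxpow /= mulmx1 Az mul1r.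
- by exists 0; rewrite mxpow_sqr0 // mxE mulr0.
Qed.

End IntegralMatrices.

Arguments is_int {F} x.
Arguments intmx {F n} A.

Section WeightedShift.
Variable F : fieldType.
Variable n : nat.
Implicit Types (f : int -> int) (d : int).

Definition shiftmx f d : 'M[F]_n :=
  \matrix_(r, c) ((pos c == pos r + d)%:R * (f (pos r))%:~R).

Definition shift_weight f d (k : nat) (x : int) : int := \prod_(t < k) f (x + t%:Z * d).

Lemma shift_weightS f d k x : shift_weight f d k.+1 x = f x * shift_weight f d k (x + d).
Proof.
rewrite /shift_weight big_ord_recl mul0r addr0; congr (_ * _).
by apply: eq_bigr => t _; congr f; rewrite lift0 -add1n PoszD; ring.
Qed.

Lemma eq_pos (r c : 'I_n) : (pos r == pos c) = (r == c).
Proof. by rewrite /pos eqz_nat eqSS. Qed.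

Lemma sum_pos_eq (p : int) :
  \sum_(m : 'I_n) ((pos m == p)%:R : F) = ((0 < p) && (p <= n%:Z))%:R.
Proof.
have [/andP[p_gt0 p_le_n] | p_out] := boolP ((0 < p) && (p <= n%:Z)).
  have ltpn : (`|p| - 1 < n)%N by lia.
  have pos_p : pos (Ordinal ltpn) = p by rewrite /pos /=; lia.
  rewrite (bigD1 (Ordinal ltpn)) //= pos_p eqxx big1 ?addr0 // => m ne_m.
  case: eqP => // pos_m; case/eqP: ne_m; apply: val_inj.
  by move: pos_m pos_p; rewrite /pos /=; lia.
rewrite big1 // => m _.
by case: eqP => // pos_m; move: p_out (ltn_ord m); rewrite -pos_m /pos; lia.
Qed.

Lemma mxpow_shiftmx f d k r c :
  mxpow (shiftmx f d) k r c =
  (pos c == pos r + k%:Z * d)%:R * (shift_weight f d k (pos r))%:~R.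
Proof.
elim: k r c => [|k IHk] r c.
  rewrite mxE mul0r addr0 /shift_weight big_ord0 /= mulr1.
  by rewrite eq_pos eq_sym.
rewrite /mxpow iterS -/(mxpow _ k) mxE.
under eq_bigr do rewrite !mxE IHk.
pose T : F := (pos c == pos r + d + k%:Z * d)%:R *
  (f (pos r) * shift_weight f d k (pos r + d))%:~R.
rewrite (eq_bigr (fun m => (pos m == pos r + d)%:R * T : F)) => [|m _]; last first.
  by case: eqP => [->|_]; rewrite ?mul0r // /T rmorphM /=; ring.
rewrite -mulr_suml sum_pos_eq /T shift_weightS.
have -> : pos r + d + k%:Z * d = pos r + k.+1%:Z * d by rewrite -addn1 PoszD; ring.
case: eqP => [pos_c|_]; last by rewrite !mul0r mulr0.
have kd_sign : (0 <= d -> 0 <= k%:Z * d) /\ (d <= 0 -> k%:Z * d <= 0).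
  by split=> ?; [exact: mulr_ge0 | exact: mulr_ge0_le0].
(* pos r + d lies between pos r and pos c, hence is a valid row index. *)
rewrite -addn1 PoszD mulrDl mul1r in pos_c.
have := ltn_ord r; have := ltn_ord c; rewrite /pos in pos_c * => lt_c lt_r.
by rewrite (_ : (_ && _) = true) ?mul1r //; lia.
Qed.

Hypothesis charF0 : [pchar F] =i pred0.

Lemma nilexp_shiftmx_intmx f d :
  (forall k (r : 'I_n), (k < n)%N -> (k`!%:Z %| shift_weight f d k (pos r))%Z) ->
  intmx (nilexp (shiftmx f d)).
Proof.
move=> dvd_weight; apply: nilexp_intmx => // k ltkn r c.
have /dvdzP[q weight_q] := dvd_weight k r ltkn.
rewrite mxpow_shiftmx weight_q; case: (pos c == _).
  by exists q; rewrite mul1r mulrC.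
by exists 0; rewrite mul0r mulr0.
Qed.

End WeightedShift.

Section XFactor.
Variables n i : nat.

Definition xweight (x : int) : int := - (cc n i `|x|)%:Z.

Lemma cc_addn m : cc n i (m + i) = (cc n i m).-1.
Proof.
rewrite /cc; have -> : (n - (m + i) = n - m - 1 * i)%N by rewrite mul1n subnDA.
by rewrite divnBMl subn1.
Qed.

Lemma oppXX_shiftmx (F : fieldType) : - XX F n i = shiftmx F n xweight i.
Proof.
apply/matrixP => r c; rewrite !mxE /XX summxE.
rewrite (eq_bigr (fun j => if j == r.+1
    then (pos c == pos r + i%:Z)%:R * (cc n i j)%:R else 0)) => [|j _]; last first.
  rewrite !mxE (_ : (pos r == j) = (j == r.+1)); last by rewrite /pos eqz_nat eq_sym.
  by case: eqP => [->|_]; rewrite ?mulr0 // /pos PoszD mulrC.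
rewrite -big_mkcond big_nat1_eq.
case: eqP => [pos_c | _]; last by case: ifP; rewrite !mul0r ?oppr0.
rewrite ifT; last by move: pos_c (ltn_ord c); rewrite /pos; lia.
by rewrite /xweight !mul1r mulrNz.
Qed.

Lemma dvdz_fact_xweight k (x : int) : 0 < x -> (k`!%:Z %| shift_weight xweight i k x)%Z.
Proof.
move=> x_gt0; apply: (@dvdz_fact_prod_steps (fun t => xweight (x + t%:Z * i%:Z)) 1) => // t.
rewrite /xweight (_ : absz (x + t.+1%:Z * i%:Z) = (absz (x + t%:Z * i%:Z)%R + i)%N).
  by rewrite cc_addn; case: (cc n i _) => [|m] //= _ _; lia.
by nia.
Qed.

End XFactor.

Section ZFactor.
Variables n i : nat.
Hypothesis i_gt0 : (0 < i)%N.

(* The j in [0, i) with x = j + 1 (mod i): row x of xi (j + 1) j is nonzero only for it. *)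
Definition residue (x : int) : nat := `|((x - 1) %% i%:Z)%Z|.

Definition zweight (x : int) : int := - aa n i (residue x).

Lemma residue_lt x : (residue x < i)%N.
Proof. rewrite /residue; lia. Qed.

Lemma residue_pred x : (0 < residue x)%N -> residue (x - 1) = (residue x).-1.
Proof.
rewrite /residue => res_gt0.
have := divz_eq (x - 1) i%:Z.
rewrite (@modz_eq (x - 1 - 1) ((x - 1) %/ i%:Z)%Z (((x - 1) %% i%:Z)%Z - 1)); lia.
Qed.

Lemma dvdz_sub_residue x j : (j < i)%N -> (i%:Z %| x - j.+1%:Z)%Z = (residue x == j).
Proof.
move=> lt_ji; rewrite /residue.
set s := ((x - 1) %% i%:Z)%Z; set q := ((x - 1) %/ i%:Z)%Z.
have x_eq : x - 1 = q * i%:Z + s by rewrite /q /s -divz_eq.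
have s_range : 0 <= s < i%:Z by rewrite /s; lia.
have [le_js | lt_sj] := lerP j%:Z s.
  rewrite (sameP dvdz_mod0P eqP) (@modz_eq _ q (s - j%:Z)); [apply/eqP/eqP | |]; lia.
rewrite (sameP dvdz_mod0P eqP) (@modz_eq _ (q - 1) (s - j%:Z + i%:Z));
  [apply/eqP/eqP | |]; lia.
Qed.

Lemma aa0 : aa n i 0 = 0.
Proof. by rewrite /aa mulr0 oppr0 mod0z mulr0. Qed.

Lemma oppZZ_shiftmx (F : fieldType) : - ZZ F n i = shiftmx F n zweight (-1).
Proof.
apply/matrixP => r c; rewrite !mxE /ZZ summxE.
rewrite (eq_big_nat _ _ (F2 := fun j => if j == residue (pos r)
    then (pos c == pos r + -1)%:R * (aa n i j)%:~R else 0)) => [|j /andP[_ lt_ji]]; last first.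
  rewrite !mxE dvdz_sub_residue // [residue _ == j]eq_sym.
  rewrite (_ : (pos r - j.+1%:Z == pos c - j%:Z) = (pos c == pos r + -1)); last first.
    by apply/eqP/eqP; lia.
  by case: eqP; case: eqP; rewrite /= ?mulr1 ?mulr0 ?mul1r ?mul0r.
rewrite -big_mkcond big_nat1_eq residue_lt andbT /zweight.
case: ifP => [_ | /negbT]; first by rewrite rmorphN mulrN.
by rewrite -leqNgt leqn0 => /eqP ->; rewrite aa0 oppr0 mulr0.
Qed.

Lemma aa_mod1 m : (n %% i == 1)%N -> (0 < m < i)%N -> aa n i m = (i - m)%N.
Proof.
move=> n_mod m_range; rewrite /aa /eps n_mod mul1r.
have n_eq : n%:Z = (n %/ i)%:Z * i%:Z + 1.
  by rewrite [in LHS](divn_eq n i) (eqP n_mod) PoszD PoszM.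
rewrite (@modz_eq _ (- ((n %/ i)%:Z * m%:Z) - 1) (i%:Z - m%:Z)); [lia | lia |].
by rewrite n_eq; ring.
Qed.

Lemma aa_modN1 m : ((n + 1) %% i == 0)%N -> (n %% i != 1)%N -> (m < i)%N ->
  aa n i m = - m%:Z.
Proof.
move=> n1_mod n_mod lt_mi; rewrite /aa /eps (negbTE n_mod) mulN1r.
have n_eq : n%:Z = ((n + 1) %/ i)%:Z * i%:Z - 1.
  have := divn_eq (n + 1) i; rewrite (eqP n1_mod) addn0 => n1_eq.
  by apply/eqP; rewrite eq_sym subr_eq -PoszM -n1_eq PoszD.
rewrite (@modz_eq _ (- (((n + 1) %/ i)%:Z * m%:Z)) m%:Z); [by [] | lia |].
by rewrite n_eq; ring.
Qed.

Lemma dvdz_fact_zweight k x :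
  (n %% i == 1 %% i)%N || ((n + 1) %% i == 0)%N ->
  (k`!%:Z %| shift_weight zweight (-1) k x)%Z.
Proof.
move=> n_pm1.
apply: (@dvdz_fact_prod_steps (fun t => zweight (x + t%:Z * -1)) (-1)) => // t.
rewrite /zweight (_ : x + t.+1%:Z * -1 = x + t%:Z * -1 - 1); last by lia.
set y := x + t%:Z * -1.
have [-> | res_gt0] := posnP (residue y); first by rewrite aa0 oppr0 eqxx.
rewrite residue_pred // => _.
have [-> | res1_gt0] := posnP (residue y).-1; first by rewrite aa0 oppr0 eqxx.
have := residue_lt y; have [n_mod lt_res _ | n_mod lt_res _] := boolP (n %% i == 1)%N.
  rewrite !aa_mod1 ?res1_gt0 ?res_gt0 ?lt_res //=; lia.
have n1_mod : ((n + 1) %% i == 0)%N.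
  case/orP: n_pm1 => // n_mod1; case/negP: n_mod.
  by move: n_mod1; rewrite (@modn_small 1 i) //; lia.
by rewrite !aa_modN1 // ?opprK; [lia | exact: leq_ltn_trans (leq_pred _) lt_res].
Qed.

End ZFactor.

Section WFactor.
Variable F : fieldType.
Variables n i : nat.

Lemma xi_mul_eq0 (a b c d : int) :
  ~~ (i%:Z %| b - c)%Z -> xi F n i a b *m xi F n i c d = 0.
Proof.
move=> not_dvd; apply/matrixP => r s; rewrite !mxE; apply: big1 => m _; rewrite !mxE.
case: andP => [[/eqP eq_rm dvd_r] | _]; last by rewrite mul0r.
case: andP => [[_ dvd_m] | _]; last by rewrite mulr0.
case/negP: not_dvd; have -> : b - c = (pos m - c) - (pos r - a) by lia.
by rewrite rpredB.
Qed.

Lemma not_dvdz_lt (m : int) : 0 < m < i%:Z -> ~~ (i%:Z %| m)%Z.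
Proof. by move=> m_range; rewrite dvdzE gtnNdvd //; lia. Qed.

Lemma EE_mul_eq0 k l : (0 < k < i)%N -> (0 < l < i)%N ->
  EE F n i k i *m EE F n i l i = 0.
Proof.
move=> k_range l_range; rewrite /EE; case: ifP => _; last rewrite mulNmx mulmxN opprK;
  by apply: xi_mul_eq0; apply: not_dvdz_lt; lia.
Qed.

Lemma is_int_EE k l r c : is_int (EE F n i k l r c).
Proof. by rewrite /EE; case: ifP => _; rewrite !mxE; [|apply: is_intN]; apply: is_int_nat. Qed.

Let W := \sum_(1 <= k < i) 'C(i, k)%:R *: EE F n i k i.

Lemma binomial_sumEE_sqr0 : W *m W = 0.
Proof.
rewrite mulmx_suml big1_seq // => k; rewrite mem_index_iota => /andP[_ k_range].
rewrite -scalemxAl mulmx_sumr big1_seq ?scaler0 // => l.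
rewrite mem_index_iota => /andP[_ l_range].
by rewrite -scalemxAr EE_mul_eq0 ?scaler0.
Qed.

Lemma intmx_binomial_sumEE : intmx W.
Proof.
move=> r c; rewrite summxE; apply: is_int_sum => k _.
by rewrite mxE; apply: is_intM; [apply: is_int_nat | apply: is_int_EE].
Qed.

End WFactor.

Theorem proposition4p5 (F : fieldType) (charF0 : [pchar F] =i pred0)
  (n i : nat) (i_gt0 : (0 < i)%N) (i_lt_n : (i < n)%N)
  (n_pm1 : (n %% i == 1 %% i)%N || ((n + 1) %% i == 0)%N) :
  forall r c : 'I_n, exists z : int, gg F n i r c = z%:~R.
Proof.
rewrite /gg (@oppZZ_shiftmx n i i_gt0) oppXX_shiftmx.
apply: intmx_mul; first apply: intmx_mul.
- by apply: nilexp_shiftmx_intmx => // k r _; apply: dvdz_fact_zweight.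
- by apply: nilexp_shiftmx_intmx => // k r _; apply: dvdz_fact_xweight.
- apply: nilexp_sqr0_intmx => //; first by rewrite mulNmx mulmxN opprK binomial_sumEE_sqr0.
  by move=> r c; rewrite mxE; apply/is_intN/intmx_binomial_sumEE.
Qed.
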